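(* Let $q\ge5$ and let $\mathcal O$ be a $G_q$-orbit of $E_{n\Gamma}$-lines. Then $\Pi_{\overline{1_{\mathcal C}}}+2\Pi_{2_{\mathcal C}}+3\Pi_{3_{\mathcal C}}=q+1$ and $\Pi_{0_{\mathcal C}}=\Pi_{2_{\mathcal C}}+2\Pi_{3_{\mathcal C}}$ for all $q$; and if $q\not\equiv0\pmod3$, then $P_{1_\Gamma}+2P_T+3P_{3_\Gamma}=q+1$ and $P_{0_\Gamma}=P_T+2P_{3_\Gamma}$.
   Context: Let $\mathbb F_q$ be the field of order $q$ and $\mathrm{PG}(3,q)$ the projective space with points $\mathbf P(x_0,x_1,x_2,x_3)$. For $t\in\mathbb F_q$ put $P(t)=\mathbf P(t^3,t^2,t,1)$, and $P(\infty)=\mathbf P(1,0,0,0)$; the twisted cubic is $\mathcal C=\{P(t):t\in\mathbb F_q\cup\{\infty\}\}$ and $G_q$ is the group of projectivities fixing $\mathcal C$. The osculating plane at $P(t)$ is $x_0-3tx_1+3t^2x_2-t^3x_3=0$ ($t\in\mathbb F_q$) and $x_3=0$ at $P(\infty)$; these are the $\Gamma$-planes. The tangent at $P(t)$, $t\in\mathbb F_q$, is the line through $P(t)$ and $\mathbf P(3t^2,2t,1,0)$; at $P(\infty)$ it is the line through $\mathbf P(1,0,0,0),\mathbf P(0,1,0,0)$. A real chord joins two distinct points of $\mathcal C$; an imaginary chord joins $P(\tau),P(\tau^q)$, $\tau\in\mathbb F_{q^2}\setminus\mathbb F_q$; chords are real chords, tangents and imaginary chords. An axis is the intersection of two distinct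 osculating planes at points of $\mathcal C$, or of the osculating planes at conjugate points $P(\tau),P(\tau^q)$. An $E_{n\Gamma}$-line is a line with no point of $\mathcal C$, not contained in a $\Gamma$-plane, which is neither a chord nor an axis. Plane types: a $d_{\mathcal C}$-plane ($d\in\{0,2,3\}$) contains exactly $d$ points of $\mathcal C$; a $\overline{1_{\mathcal C}}$-plane is a non-$\Gamma$-plane containing exactly one point of $\mathcal C$. Point types for $q\not\equiv 0\pmod 3$: $T$-points are points off $\mathcal C$ on a tangent; $\mu_\Gamma$-points ($\mu\in\{0,1,3\}$) are points off $\mathcal C$ lying in exactly $\mu$ distinct $\Gamma$-planes. For a $G_q$-orbit $\mathcal O$ of lines, $\Pi_\pi$ = number of $\pi$-planes through a line of $\mathcal O$, $P_{\mathfrak p}$ = number of $\mathfrak p$-points on a line of $\mathcal O$ (independent of the line). *)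

(* PG(3,q) modelled by subspaces of F^4 = 'rV[F]_4, each
   subspace represented canonically by its generated square matrix <<A>>%MS. *)
From HB Require Import structures.
From mathcomp Require Import all_boot all_order all_algebra all_field.
Set Implicit Arguments. Unset Strict Implicit. Unset Printing Implicit Defensive.
Import GRing.Theory.
Local Open Scope ring_scope.

Definition vec4 {K : fieldType} (a b c d : K) : 'rV[K]_4 :=
  \row_(i < 4) [:: a; b; c; d]`_i.

Definition ppt {K : fieldType} (v : 'rV[K]_4) : 'M[K]_4 := <<v>>%MS.

Definition Cpt {K : fieldType} (t : K) : 'M[K]_4 := ppt (vec4 (t ^+ 3) (t ^+ 2) t 1).
Definition Cinf (K : fieldType) : 'M[K]_4 := ppt (vec4 (1 : K) 0 0 0).

Definition plane_of {K : fieldType} (c : 'rV[K]_4) : 'M[K]_4 := <<kermx c^T>>%MS.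

Definition osc {K : fieldType} (t : K) : 'M[K]_4 :=
  plane_of (vec4 1 (- (3 * t)) (3 * t ^+ 2) (- t ^+ 3)).
Definition osc_inf (K : fieldType) : 'M[K]_4 := plane_of (vec4 (0 : K) 0 0 1).

Definition tangent {K : fieldType} (t : K) : 'M[K]_4 :=
  <<(Cpt t + ppt (vec4 (3 * t ^+ 2) (2 * t) 1 0))%MS>>%MS.
Definition tangent_inf (K : fieldType) : 'M[K]_4 :=
  <<(ppt (vec4 (1 : K) 0 0 0) + ppt (vec4 (0 : K) 1 0 0))%MS>>%MS.

Definition subspaces_of_dim (F : finFieldType) (r : nat) : {set 'M[F]_4} :=
  [set <<A>>%MS | A : 'M[F]_4 & \rank A == r].
Definition points (F : finFieldType) := subspaces_of_dim F 1.
Definition lines  (F : finFieldType) := subspaces_of_dim F 2.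
Definition planes (F : finFieldType) := subspaces_of_dim F 3.

Definition curve (F : finFieldType) : {set 'M[F]_4} :=
  Cinf F |: [set Cpt t | t : F].

Definition Gamma_planes (F : finFieldType) : {set 'M[F]_4} :=
  osc_inf F |: [set osc t | t : F].

Definition extL {F : finFieldType} (L : fieldExtType F) (A : 'M[F]_4) : 'M[L]_4 :=
  map_mx (in_alg L) A.

Definition not_in_base {F : finFieldType} (L : fieldExtType F) (tau : L) : Prop :=
  ~ exists a : F, tau = in_alg L a.

Definition real_chord {F : finFieldType} (l : 'M[F]_4) : Prop :=
  exists P Q, [/\ P \in curve F, Q \in curve F, P != Q & (l == P + Q)%MS].

Definition is_tangent {F : finFieldType} (l : 'M[F]_4) : Prop :=
  (exists t : F, (l == tangent t)%MS) \/ (l == tangent_inf F)%MS.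

Definition imaginary_chord {F : finFieldType} (L : fieldExtType F) (l : 'M[F]_4) : Prop :=
  exists tau : L, not_in_base tau /\
    (extL L l == Cpt tau + Cpt (tau ^+ #|F|))%MS.

Definition is_chord {F : finFieldType} (L : fieldExtType F) (l : 'M[F]_4) : Prop :=
  real_chord l \/ is_tangent l \/ imaginary_chord L l.

Definition is_axis {F : finFieldType} (L : fieldExtType F) (l : 'M[F]_4) : Prop :=
  (exists H1 H2, [/\ H1 \in Gamma_planes F, H2 \in Gamma_planes F, H1 != H2
                    & (l == H1 :&: H2)%MS])
  \/ (exists tau : L, not_in_base tau /\
        (extL L l == osc tau :&: osc (tau ^+ #|F|))%MS).

Definition EnGamma_line {F : finFieldType} (L : fieldExtType F) (l : 'M[F]_4) : Prop :=
  [/\ l \in lines F,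
      (forall P, P \in curve F -> ~~ (P <= l)%MS),
      (forall H, H \in Gamma_planes F -> ~~ (l <= H)%MS),
      ~ is_chord L l
    & ~ is_axis L l].

Definition nC {F : finFieldType} (H : 'M[F]_4) : nat :=
  #|[set P in curve F | (P <= H)%MS]|.

Definition Pi_d {F : finFieldType} (l : 'M[F]_4) (d : nat) : nat :=
  #|[set H in planes F | (l <= H)%MS & nC H == d]|.
Definition Pi_1bar {F : finFieldType} (l : 'M[F]_4) : nat :=
  #|[set H in planes F | [&& (l <= H)%MS, nC H == 1%N & H \notin Gamma_planes F]]|.

Definition nGamma {F : finFieldType} (P : 'M[F]_4) : nat :=
  #|[set H in Gamma_planes F | (P <= H)%MS]|.

Definition T_point {F : finFieldType} (P : 'M[F]_4) : bool :=
  [&& P \in points F, P \notin curve F &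
      [exists t : F, (P <= tangent t)%MS] || (P <= tangent_inf F)%MS].

Definition muGamma_point {F : finFieldType} (mu : nat) (P : 'M[F]_4) : bool :=
  [&& P \in points F, P \notin curve F & nGamma P == mu].

Definition P_T {F : finFieldType} (l : 'M[F]_4) : nat :=
  #|[set P | T_point P & (P <= l)%MS]|.
Definition P_muGamma {F : finFieldType} (l : 'M[F]_4) (mu : nat) : nat :=
  #|[set P | muGamma_point mu P & (P <= l)%MS]|.

(* Only three properties of l are used: it is a line, it misses the twisted
   cubic C, and it lies in no Gamma-plane.
   The q + 1 planes through l each meet C in at most three points, the roots of
   a binary cubic form, and each of the q + 1 points of C lies on exactly one of
   them; counting these incidences both ways gives the two identities for the
   Pi's.  Dually, when 3 != 0 in F_q each of the q + 1 points of l lies on at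
   most three Gamma-planes (the osculating planes through a point correspond to
   the roots of a cubic, [osc_form]), and each of the q + 1 Gamma-planes meets l
   in exactly one point.  A point off C lies on exactly two Gamma-planes iff its
   osculating cubic has a double root, i.e. iff it lies on a tangent, so these
   points are the T-points. *)

From mathcomp Require Import all_boot all_order all_algebra all_field.
From mathcomp Require Import ring zify.
Set Implicit Arguments. Unset Strict Implicit. Unset Printing Implicit Defensive.
Import GRing.Theory.
Local Open Scope ring_scope.

Section LinearAlgebra.
Variable K : fieldType.

Lemma vec4E (x : 'rV[K]_4) : x = vec4 (x 0 0) (x 0 1) (x 0 2) (x 0 3).
Proof.
apply/rowP => i; rewrite mxE.
by case: i => [[|[|[|[|i]]]] Hi] //=; congr (x 0 _); apply: val_inj.
Qed.

Lemma vec4D (a b c d a' b' c' d' : K) :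
  vec4 a b c d + vec4 a' b' c' d' = vec4 (a + a') (b + b') (c + c') (d + d').
Proof. by apply/rowP => i; rewrite !mxE; case: i => [[|[|[|[|i]]]] Hi]. Qed.

Lemma vec4Z (k a b c d : K) :
  k *: vec4 a b c d = vec4 (k * a) (k * b) (k * c) (k * d).
Proof. by apply/rowP => i; rewrite !mxE; case: i => [[|[|[|[|i]]]] Hi]. Qed.

Lemma vec4_inj (a b c d a' b' c' d' : K) :
  vec4 a b c d = vec4 a' b' c' d' -> [/\ a = a', b = b', c = c' & d = d'].
Proof.
move=> E; have e i : vec4 a b c d 0 i = vec4 a' b' c' d' 0 i by rewrite E.
by move: (e 0) (e 1) (e 2%:R) (e 3%:R); rewrite !mxE.
Qed.

Lemma vec4_eq0 (a b c d : K) :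
  (vec4 a b c d == 0) = [&& a == 0, b == 0, c == 0 & d == 0].
Proof.
have -> : 0 = vec4 0 0 0 0 :> 'rV[K]_4 by rewrite [LHS]vec4E !mxE.
by apply/eqP/and4P => [/vec4_inj[-> -> -> ->]|[/eqP-> /eqP-> /eqP-> /eqP->]].
Qed.

Lemma vec4_sub_plane_of (a b c d c0 c1 c2 c3 : K) :
  (<<vec4 a b c d>> <= plane_of (vec4 c0 c1 c2 c3))%MS =
  (a * c0 + b * c1 + c * c2 + d * c3 == 0).
Proof.
rewrite /plane_of !genmxE sub_kermx.
have -> : vec4 a b c d *m (vec4 c0 c1 c2 c3)^T = (a * c0 + b * c1 + c * c2 + d * c3)%:M.
  rewrite [LHS]mx11_scalar; congr (_%:M).
  by rewrite !mxE !big_ord_recl big_ord0 !mxE /= addr0 !addrA.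
by rewrite -scalemx1 scaler_eq0 (negbTE (matrix_nonzero1 _ _)) orbF.
Qed.


Lemma mxrank_adds_point m k n (X : 'M[K]_(m, n)) (Y : 'M[K]_(k, n)) :
  \rank Y = 1%N -> ~~ (Y <= X)%MS -> \rank (X + Y)%MS = (\rank X).+1.
Proof.
move=> rY nYX; have lt : (\rank X < \rank (X + Y))%N.
  by apply: rank_ltmx; rewrite ltmxE addsmxSl addsmx_sub submx_refl.
by have [le _] := mxrank_adds_leqif X Y; rewrite rY in le; lia.
Qed.

Lemma mxrank_cap_hyperplane m k n (X : 'M[K]_(m, n.+1)) (H : 'M[K]_(k, n.+1)) :
  \rank H = n -> ~~ (X <= H)%MS -> \rank (X :&: H)%MS = (\rank X).-1.
Proof.
move=> rH nXH; have lt : (\rank H < \rank (X + H))%N.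
  by apply: rank_ltmx; rewrite ltmxE addsmxSr addsmx_sub submx_refl andbT.
have := mxrank_sum_cap X H; have := rank_leq_col (X + H)%MS; lia.
Qed.

Lemma sub_adds_rV n (x u1 u2 : 'rV[K]_n) :
  (x <= u1 + u2)%MS -> exists a b, x = a *: u1 + b *: u2.
Proof.
case/sub_addsmxP => -[w1 w2] /= ->; exists (w1 0 0), (w2 0 0).
by rewrite {1}[w1]mx11_scalar {1}[w2]mx11_scalar !mul_scalar_mx.
Qed.

Lemma lincomb2_sub_adds m (u1 u2 : 'rV[K]_m) a b : ((a *: u1 + b *: u2)%R <= u1 + u2)%MS.
Proof. by rewrite addmx_sub_adds ?scalemx_sub. Qed.

Lemma coord2_inj n (u1 u2 : 'rV[K]_n) a b a' b' : u1 != 0 -> ~~ (u2 <= u1)%MS ->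
  a *: u1 + b *: u2 = a' *: u1 + b' *: u2 -> a = a' /\ b = b'.
Proof.
move=> u1_neq0 u2_notin_u1 E; have e : (a - a') *: u1 + (b - b') *: u2 = 0.
  by rewrite !scalerBl addrACA -opprD E subrr.
have db : b - b' = 0.
  apply/eqP; apply: contraNT u2_notin_u1 => nb.
  have e2 : (b - b') *: u2 = - ((a - a') *: u1) by apply/eqP; rewrite -addr_eq0 addrC e.
  by rewrite -(scale1r u2) -(mulVf nb) -scalerA e2 -scaleNr !scalemx_sub.
move: e; rewrite db scale0r addr0 => /eqP; rewrite scaler_eq0 (negbTE u1_neq0) orbF.
by move: db => /eqP; rewrite !subr_eq0 => /eqP-> /eqP->.
Qed.

Lemma notsub_of_sub_compl m k n (X : 'M[K]_(m, n)) (P : 'M[K]_(k, n)) :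
  P != 0 -> (P <= X^C)%MS -> ~~ (P <= X)%MS.
Proof.
move=> nP PXc; apply/negP => PX.
by have := sub_capmx P X (X^C)%MS; rewrite PX PXc capmx_compl submx0 (negbTE nP).
Qed.

Lemma compl_notsub m k n (X : 'M[K]_(m, n)) (H : 'M[K]_(k, n)) :
  (\rank H < n)%N -> (X <= H)%MS -> ~~ (X^C <= H)%MS.
Proof.
move=> rH XH; apply/negP => XcH.
have /mxrankS : (X + X^C <= H)%MS by rewrite addsmx_sub XH.
by rewrite (eqnP (addsmx_compl_full X)); apply/negP; rewrite -ltnNge.
Qed.

End LinearAlgebra.

Section Subspaces.
Variable F : finFieldType.
Implicit Types (l H P : 'M[F]_4) (x : 'rV[F]_4).

Lemma subspaces_of_dimE r (X : 'M[F]_4) :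
  (X \in subspaces_of_dim F r) = (<<X>>%MS == X) && (\rank X == r).
Proof.
apply/imsetP/andP => [[A]|[/eqP E1 /eqP E2]].
  by rewrite inE => /eqP rA ->; rewrite genmx_id genmxE rA.
by exists X; rewrite ?inE ?E2 ?E1.
Qed.

Lemma subspaces_of_dim_sub r m (Z : 'M[F]_(m, 4)) : \rank Z = r ->
  [set Y in subspaces_of_dim F r | (Y <= Z)%MS] = [set <<Z>>%MS].
Proof.
move=> rZ; apply/setP => Y; rewrite !inE subspaces_of_dimE.
apply/idP/eqP => [/andP[/andP[/eqP gY /eqP rY] YZ]|->].
  by rewrite -gY; apply/eq_genmx/eqmxP; have [_ <-] := mxrank_leqif_eq YZ; rewrite rY rZ.
by rewrite genmx_id !genmxE rZ !eqxx submx_refl.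
Qed.

Lemma subspaces_of_dim_sup r m (Z : 'M[F]_(m, 4)) : \rank Z = r ->
  [set Y in subspaces_of_dim F r | (Z <= Y)%MS] = [set <<Z>>%MS].
Proof.
move=> rZ; apply/setP => Y; rewrite !inE subspaces_of_dimE.
apply/idP/eqP => [/andP[/andP[/eqP gY /eqP rY] ZY]|->].
  rewrite -gY; apply/eq_genmx/eqmx_sym/eqmxP.
  by have [_ <-] := mxrank_leqif_eq ZY; rewrite rY rZ.
by rewrite genmx_id !genmxE rZ !eqxx submx_refl.
Qed.

Lemma vec_point x : x != 0 -> <<x>>%MS \in points F.
Proof. by move=> nx; rewrite subspaces_of_dimE genmx_id eqxx genmxE rank_rV nx. Qed.

Lemma point_vec P : P \in points F -> exists2 x : 'rV[F]_4, x != 0 & P = <<x>>%MS.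
Proof.
move=> pP; have := pP; rewrite subspaces_of_dimE => /andP[/eqP gP /eqP rP].
have nzP : nz_row P != 0 by rewrite nz_row_eq0 -mxrank_eq0 rP.
exists (nz_row P) => //; apply/esym/set1P.
have := subspaces_of_dim_sub rP; rewrite gP => <-.
by rewrite inE vec_point // genmxE nz_row_sub.
Qed.



Lemma planes_through_line_point l P :
  l \in lines F -> P \in points F -> ~~ (P <= l)%MS ->
  [set H in planes F | (l <= H)%MS && (P <= H)%MS] = [set <<(l + P)%MS>>%MS].
Proof.
rewrite !subspaces_of_dimE => /andP[_ /eqP rl] /andP[_ /eqP rP] nPl.
apply/setP => H; have /setP/(_ H) := subspaces_of_dim_sup (mxrank_adds_point rP nPl).
by rewrite rl !inE addsmx_sub.
Qed.

Lemma points_of_line_plane l H :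
  l \in lines F -> H \in planes F -> ~~ (l <= H)%MS ->
  [set P in points F | (P <= l)%MS && (P <= H)%MS] = [set <<l :&: H>>%MS].
Proof.
rewrite !subspaces_of_dimE => /andP[_ /eqP rl] /andP[_ /eqP rH] nlH.
apply/setP => P; have /setP/(_ P) := subspaces_of_dim_sub (mxrank_cap_hyperplane rH nlH).
by rewrite rl !inE sub_capmx.
Qed.



Section Pencil.
Variables u1 u2 : 'rV[F]_4.
Hypotheses (u1_neq0 : u1 != 0) (u2_notin_u1 : ~~ (u2 <= u1)%MS).


Lemma coord2_pencil s a b : u1 + s *: u2 = a *: u1 + b *: u2 -> a = 1 /\ b = s.
Proof. by rewrite -[u1 in LHS]scale1r => /coord2_inj[] // <- <-. Qed.

Definition pencil (o : option F) : 'M[F]_4 :=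
  if o is Some t then <<u1 + t *: u2>>%MS else <<u2>>%MS.

Lemma pencil_inj : injective pencil.
Proof.
have scaled (y y' : 'rV[F]_4) : <<y>>%MS = <<y'>>%MS -> exists c, y = c *: y'.
  by move=> E; apply/sub_rVP; rewrite -genmxE E genmxE.
have Some_neq_None s : <<u1 + s *: u2>>%MS <> <<u2>>%MS.
  case/scaled => c Ec; have [/esym/eqP] : 0 = 1 :> F /\ c = s.
    by apply: coord2_pencil; rewrite Ec scale0r add0r.
  by rewrite oner_eq0.
case=> [s|] [t|] //= E; [congr Some | by case: (Some_neq_None s) | by case: (Some_neq_None t)].
have [c Ec] := scaled _ _ E.
have [c1 <-] : c = 1 /\ c * t = s by apply: coord2_pencil; rewrite Ec scalerDr scalerA.
by rewrite c1 mul1r.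
Qed.

Lemma points_span2E :
  [set P in points F | (P <= u1 + u2)%MS] = [set pencil o | o : option F].
Proof.
apply/setP => P; rewrite inE; apply/andP/imsetP => [[/point_vec[x nx ->]]|[o _ ->]].
  rewrite genmxE => /sub_adds_rV[a [b Ex]].
  have [a0|na] := eqVneq a 0.
    exists None => //=; apply: eq_genmx; rewrite Ex a0 scale0r add0r; apply: eqmx_scale.
    by apply: contraNneq nx => b0; rewrite Ex a0 b0 !scale0r addr0.
  exists (Some (b / a)) => //=; apply: eq_genmx.
  have -> : x = a *: (u1 + (b / a) *: u2) by rewrite Ex scalerDr scalerA mulrCA mulfV // mulr1.
  exact: eqmx_scale.
case: o => [t|] /=; rewrite genmxE; split.
- apply: vec_point; apply/eqP => E0.
  have [/esym/eqP] : 0 = 1 :> F /\ 0 = t by apply: coord2_pencil; rewrite E0 !scale0r addr0.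
  by rewrite oner_eq0.
- by rewrite addmx_sub_adds ?scalemx_sub.
- by apply: vec_point; apply: contraNneq u2_notin_u1 => ->; rewrite sub0mx.
- by rewrite addsmxSr.
Qed.

End Pencil.

Lemma line_span2 l : l \in lines F ->
  exists u1 u2 : 'rV[F]_4, [/\ u1 != 0, ~~ (u2 <= u1)%MS & (l :=: u1 + u2)%MS].
Proof.
rewrite subspaces_of_dimE => /andP[_ /eqP rl].
have nu1 : nz_row l != 0 by rewrite nz_row_eq0 -mxrank_eq0 rl.
have /row_subPn[i nu2] : ~~ (l <= nz_row l)%MS.
  by apply: contraTN isT => /mxrankS; rewrite rl rank_rV nu1.
exists (nz_row l), (row i l); split=> //; apply/eqmx_sym/eqmxP.
have ru2 : \rank (row i l) = 1%N.
  by rewrite rank_rV (_ : row i l != 0) //; apply: contraNneq nu2 => ->; rewrite sub0mx.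
have sub : (nz_row l + row i l <= l)%MS by rewrite addsmx_sub nz_row_sub row_sub.
by have [_ <-] := mxrank_leqif_eq sub; rewrite mxrank_adds_point // rank_rV nu1 rl.
Qed.

Lemma card_points_line l : l \in lines F ->
  #|[set P in points F | (P <= l)%MS]| = (#|F| + 1)%N.
Proof.
case/line_span2 => u1 [u2 [nu1 nu2 El]].
have -> : [set P in points F | (P <= l)%MS] = [set P in points F | (P <= u1 + u2)%MS].
  by apply/setP => P; rewrite !inE El.
by rewrite points_span2E // card_imset ?card_option ?addn1 //; exact: pencil_inj.
Qed.

(* The planes through l correspond to the points of a complementary line m:
   each of them meets m in exactly one point. *)
Lemma card_planes_line l : l \in lines F ->
  #|[set H in planes F | (l <= H)%MS]| = (#|F| + 1)%N.
Proof.
move=> lL; have := lL; rewrite subspaces_of_dimE => /andP[_ /eqP rl].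
pose m : 'M[F]_4 := <<l^C>>%MS.
have mL : m \in lines F by rewrite subspaces_of_dimE genmx_id eqxx genmxE mxrank_compl rl.
have Pnl P : P \in points F -> (P <= m)%MS -> ~~ (P <= l)%MS.
  case/point_vec => x nx ->; rewrite !genmxE; exact: notsub_of_sub_compl.
have mnH H : H \in planes F -> (l <= H)%MS -> ~~ (m <= H)%MS.
  by rewrite subspaces_of_dimE genmxE => /andP[_ /eqP rH]; apply: compl_notsub; rewrite rH.
pose join P : 'M[F]_4 := <<(l + P)%MS>>%MS.
have join_plane P : P \in points F -> (P <= m)%MS ->
    [set H in planes F | (l <= H)%MS && (P <= H)%MS] = [set join P].
  by move=> pP Pm; apply: planes_through_line_point (Pnl P pP Pm).
have meet_point H : H \in planes F -> (l <= H)%MS ->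
    [set P in points F | (P <= m)%MS && (P <= H)%MS] = [set <<m :&: H>>%MS].
  by move=> pH lH; apply: points_of_line_plane (mnH H pH lH).
have -> : [set H in planes F | (l <= H)%MS] = join @: [set P in points F | (P <= m)%MS].
  apply/setP => H; rewrite inE; apply/andP/imsetP => [[pH lH]|[P]].
    have /setP/(_ <<m :&: H>>%MS) := meet_point H pH lH.
    rewrite !inE eqxx => /and3P[pP Pm PH]; exists <<m :&: H>>%MS; first by rewrite inE pP.
    by have /setP/(_ H) := join_plane _ pP Pm; rewrite !inE pH lH PH => /esym/eqP.
  rewrite inE => /andP[pP Pm] ->.
  by have /setP/(_ (join P)) := join_plane P pP Pm; rewrite !inE eqxx => /and3P[].
rewrite card_in_imset ?card_points_line //.
move=> P Q; rewrite !inE => /andP[pP Pm] /andP[pQ Qm] E.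
have /setP/(_ (join P)) := join_plane P pP Pm; rewrite !inE eqxx => /and3P[pJ lJ PJ].
have QJ : (Q <= join P)%MS by rewrite E genmxE addsmxSr.
have /setP := meet_point _ pJ lJ => M.
move: (M P) (M Q); rewrite !inE pP Pm PJ pQ Qm QJ !andbT => /esym/eqP eP /esym/eqP eQ.
by rewrite eP eQ.
Qed.

End Subspaces.

Section Counting.
Variable T : finType.
Implicit Types (A : {set T}) (p : pred T) (f : T -> nat).

Lemma sum_pred_card (A : {pred T}) p : (\sum_(x in A) p x)%N = #|[set x in A | p x]|.
Proof.
have -> : #|[set x in A | p x]| = (\sum_(x in A | p x) 1)%N.
  by rewrite -sum1_card; apply: eq_bigl => x; rewrite inE.
by rewrite big_mkcondr; apply: eq_bigr => x _; case: (p x).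
Qed.

Lemma sum_by_value_le3 A f : {in A, forall x, f x <= 3}%N ->
  (\sum_(x in A) f x = #|[set x in A | f x == 1%N]| + 2 * #|[set x in A | f x == 2]|
     + 3 * #|[set x in A | f x == 3]|)%N.
Proof.
move=> le3; rewrite -!sum_pred_card !big_distrr -!big_split /=.
by apply: eq_bigr => x /le3; case: (f x) => [|[|[|[|k]]]].
Qed.

Lemma card_by_value_le3 A f : {in A, forall x, f x <= 3}%N ->
  #|A| = (#|[set x in A | f x == 0%N]| + #|[set x in A | f x == 1%N]|
     + #|[set x in A | f x == 2]| + #|[set x in A | f x == 3]|)%N.
Proof.
move=> le3; rewrite -sum1_card -!sum_pred_card -!big_split /=.
by apply: eq_bigr => x /le3; case: (f x) => [|[|[|[|k]]]].
Qed.

End Counting.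

Lemma card_pred_setU1_imset (T U : finType) (a : T) (g : U -> T) (p : pred T) :
  injective g -> a \notin [set g u | u : U] ->
  #|[set x in a |: [set g u | u : U] | p x]| = (p a + #|[set u | p (g u)]|)%N.
Proof.
move=> g_inj na; rewrite -sum_pred_card big_setU1 //= big_imset /=; last first.
  by move=> ? ? _ _; apply: g_inj.
by rewrite (sum_pred_card _ (p \o g)); congr (_ + #|_|)%N; apply/setP => u; rewrite !inE.
Qed.

Lemma double_count (T U : finType) (A : {set T}) (B : {set U}) (r : T -> U -> bool) :
  (\sum_(x in A) #|[set y in B | r x y]| = \sum_(y in B) #|[set x in A | r x y]|)%N.
Proof.
under eq_bigr => x _ do rewrite -(sum_pred_card B (r x)).
by rewrite exchange_big; apply: eq_bigr => y _; rewrite -(sum_pred_card A (r^~ y)).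
Qed.

Lemma card_roots_lt_size (F : finFieldType) (p : {poly F}) : p != 0 ->
  (#|[set t | root p t]| < size p)%N.
Proof.
move=> np; rewrite cardE; apply: max_poly_roots => //; last exact: enum_uniq.
by apply/allP => t; rewrite mem_enum inE.
Qed.

(* The summand [c0 == 0] counts the root at infinity of the binary cubic form. *)
Lemma card_proj_roots_cubic_le3 (F : finFieldType) (c0 c1 c2 c3 : F) :
  ~~ [&& c0 == 0, c1 == 0, c2 == 0 & c3 == 0] ->
  ((c0 == 0%R) + #|[set t | (c0 * t ^+ 3 + c1 * t ^+ 2 + c2 * t + c3 == 0)%R]| <= 3)%N.
Proof.
move=> nz; pose s := if c0 == 0 then [:: c3; c2; c1] else [:: c3; c2; c1; c0].
have size_s : ((c0 == 0%R) + size s = 4)%N by rewrite /s; case: (c0 == 0).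
have Ps_eq0 i : Poly s = 0 -> s`_i = 0 by rewrite -coef_Poly => ->; rewrite coef0.
have nPs : Poly s != 0.
  apply: contraNneq nz => /Ps_eq0 c; rewrite /s in c.
  case: (eqVneq c0 0) c => [_ | nc0] c.
    by move: (c 0%N) (c 1%N) (c 2%N) => /= -> -> ->; rewrite eqxx.
  by move: (c 3%N) => /= c00; rewrite c00 eqxx in nc0.
have -> : [set t | c0 * t ^+ 3 + c1 * t ^+ 2 + c2 * t + c3 == 0] = [set t | root (Poly s) t].
  apply/setP => t; rewrite !inE /root horner_Poly /s.
  case: (eqVneq c0 0) => [-> | _] /=; congr (_ == 0); ring.
rewrite -ltnS -size_s ltn_add2l.
exact: leq_trans (card_roots_lt_size nPs) (size_Poly s).
Qed.

Section Curve.
Variable F : finFieldType.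
Implicit Types (t s : F) (H P : 'M[F]_4).

Lemma Cpt_sub_plane_of t c0 c1 c2 c3 :
  (Cpt t <= plane_of (vec4 c0 c1 c2 c3))%MS = (c0 * t ^+ 3 + c1 * t ^+ 2 + c2 * t + c3 == 0).
Proof. by rewrite vec4_sub_plane_of; congr (_ == 0); ring. Qed.

Lemma Cinf_sub_plane_of (c0 c1 c2 c3 : F) :
  (Cinf F <= plane_of (vec4 c0 c1 c2 c3))%MS = (c0 == 0).
Proof. by rewrite vec4_sub_plane_of; congr (_ == 0); ring. Qed.

Lemma Cpt_sub_osc t s : (Cpt t <= osc s)%MS = (t == s).
Proof.
rewrite Cpt_sub_plane_of.
have -> : 1 * t ^+ 3 + - (3 * s) * t ^+ 2 + 3 * s ^+ 2 * t + - s ^+ 3 = (t - s) ^+ 3 by ring.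
by rewrite expf_eq0 subr_eq0.
Qed.

Lemma Cpt_sub_osc_inf t : (Cpt t <= osc_inf F)%MS = false.
Proof. by rewrite Cpt_sub_plane_of !mul0r !add0r oner_eq0. Qed.

Lemma Cinf_sub_osc t : (Cinf F <= osc t)%MS = false.
Proof. by rewrite Cinf_sub_plane_of oner_eq0. Qed.

Lemma Cinf_sub_osc_inf : (Cinf F <= osc_inf F)%MS.
Proof. by rewrite Cinf_sub_plane_of. Qed.

Lemma Cpt_inj : injective (@Cpt F).
Proof. by move=> s t E; apply/eqP; rewrite -Cpt_sub_osc E Cpt_sub_osc. Qed.

Lemma Cinf_notin_Cpt : Cinf F \notin [set Cpt t | t : F].
Proof. by apply/imsetP => -[t _ E]; move: Cinf_sub_osc_inf; rewrite E Cpt_sub_osc_inf. Qed.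

Lemma osc_inj : injective (@osc F).
Proof. by move=> s t E; apply/eqP; rewrite -Cpt_sub_osc -E Cpt_sub_osc. Qed.

Lemma osc_inf_notin_osc : osc_inf F \notin [set osc t | t : F].
Proof. by apply/imsetP => -[t _ E]; move: Cinf_sub_osc_inf; rewrite E Cinf_sub_osc. Qed.

Lemma Cpt_curve t : Cpt t \in curve F.
Proof. by rewrite setU1r // imset_f. Qed.

Lemma Cinf_curve : Cinf F \in curve F.
Proof. exact: setU11. Qed.

Lemma card_curve : #|curve F| = (#|F| + 1)%N.
Proof. by rewrite cardsU1 Cinf_notin_Cpt card_imset ?add1n ?addn1 //; exact: Cpt_inj. Qed.

Lemma card_Gamma_planes : #|Gamma_planes F| = (#|F| + 1)%N.
Proof. by rewrite cardsU1 osc_inf_notin_osc card_imset ?add1n ?addn1 //; exact: osc_inj. Qed.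

Lemma curve_point P : P \in curve F -> P \in points F.
Proof.
case/setU1P => [->|/imsetP[t _ ->]]; apply: vec_point.
  by rewrite vec4_eq0 oner_eq0.
by rewrite vec4_eq0 oner_eq0 !andbF.
Qed.

Lemma plane_of_plane (c : 'rV[F]_4) : c != 0 -> plane_of c \in planes F.
Proof.
move=> nc; rewrite subspaces_of_dimE genmx_id eqxx genmxE mxrank_ker mxrank_tr.
by rewrite rank_rV nc.
Qed.

Lemma Gamma_plane_plane H : H \in Gamma_planes F -> H \in planes F.
Proof.
case/setU1P => [->|/imsetP[t _ ->]]; apply: plane_of_plane.
  by rewrite vec4_eq0 oner_eq0 !andbF.
by rewrite vec4_eq0 oner_eq0.
Qed.

Lemma nC_le3 H : H \in planes F -> (nC H <= 3)%N.
Proof.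
rewrite subspaces_of_dimE => /andP[_ /eqP rH].
set c := nz_row (kermx H^T).
have nc : c != 0 by rewrite nz_row_eq0 -mxrank_eq0 mxrank_ker mxrank_tr rH.
have H_sub : (H <= plane_of c)%MS.
  rewrite genmxE sub_kermx -(trmxK H) -trmx_mul trmx_eq0.
  exact/eqP/sub_kermxP/nz_row_sub.
apply: (@leq_trans #|[set P in curve F | (P <= plane_of c)%MS]|).
  apply/subset_leq_card/subsetP => P; rewrite !inE => /andP[-> PH].
  exact: submx_trans PH H_sub.
rewrite card_pred_setU1_imset ?Cinf_notin_Cpt //; last exact: Cpt_inj.
rewrite [c]vec4E Cinf_sub_plane_of.
have -> : [set t | (Cpt t <= plane_of (vec4 (c 0 0) (c 0 1) (c 0 2) (c 0 3)))%MS] =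
    [set t | c 0 0 * t ^+ 3 + c 0 1 * t ^+ 2 + c 0 2 * t + c 0 3 == 0].
  by apply/setP => t; rewrite !inE Cpt_sub_plane_of.
by apply: card_proj_roots_cubic_le3; rewrite -vec4_eq0 -vec4E.
Qed.

End Curve.

Section GammaPoints.
Variable F : finFieldType.
Implicit Types (s t a b : F) (P : 'M[F]_4).

Definition osc_form (x0 x1 x2 x3 s : F) : F :=
  (- x3) * s ^+ 3 + (3 * x2) * s ^+ 2 + (- (3 * x1)) * s + x0.

Definition on_tangent P : bool :=
  [exists t : F, (P <= tangent t)%MS] || (P <= tangent_inf F)%MS.

Lemma vec4_sub_osc (x0 x1 x2 x3 s : F) :
  (<<vec4 x0 x1 x2 x3>> <= osc s)%MS = (osc_form x0 x1 x2 x3 s == 0).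
Proof. by rewrite vec4_sub_plane_of /osc_form; congr (_ == 0); ring. Qed.

Lemma vec4_sub_osc_inf (x0 x1 x2 x3 : F) :
  (<<vec4 x0 x1 x2 x3>> <= osc_inf F)%MS = (x3 == 0).
Proof. by rewrite vec4_sub_plane_of; congr (_ == 0); ring. Qed.

Lemma nGamma_vec4 (x0 x1 x2 x3 : F) :
  nGamma <<vec4 x0 x1 x2 x3>>%MS =
    ((x3 == 0%R) + #|[set s | osc_form x0 x1 x2 x3 s == 0%R]|)%N.
Proof.
rewrite /nGamma card_pred_setU1_imset ?osc_inf_notin_osc //; last exact: osc_inj.
by rewrite vec4_sub_osc_inf; congr (_ + _)%N; apply: eq_card => s; rewrite !inE vec4_sub_osc.
Qed.

Lemma sub_tangent (x : 'rV[F]_4) t :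
  (<<x>> <= tangent t)%MS =
  (x <= vec4 (t ^+ 3) (t ^+ 2) t 1 + vec4 (3 * t ^+ 2) (2 * t) 1 0)%MS.
Proof. by rewrite !genmxE (adds_eqmx (genmxE _) (genmxE _)). Qed.

Lemma sub_tangent_inf (x : 'rV[F]_4) :
  (<<x>> <= tangent_inf F)%MS = (x <= vec4 1 0 0 0 + vec4 0 1 0 0)%MS.
Proof. by rewrite !genmxE (adds_eqmx (genmxE _) (genmxE _)). Qed.

Lemma on_tangent_lincomb t a b :
  on_tangent <<a *: vec4 (t ^+ 3) (t ^+ 2) t 1 + b *: vec4 (3 * t ^+ 2) (2 * t) 1 0>>%MS.
Proof. by apply/orP; left; apply/existsP; exists t; rewrite sub_tangent lincomb2_sub_adds. Qed.

Lemma on_tangent_inf_lincomb a b : on_tangent <<a *: vec4 1 0 0 0 + b *: vec4 0 1 0 0>>%MS.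
Proof. by apply/orP; right; rewrite sub_tangent_inf lincomb2_sub_adds. Qed.

Lemma osc_form_root_x0 (x0 x1 x2 x3 t : F) : osc_form x0 x1 x2 x3 t = 0 ->
  x0 = x3 * t ^+ 3 - 3 * x2 * t ^+ 2 + 3 * x1 * t.
Proof. by move=> e; apply/eqP; rewrite -subr_eq0 -e /osc_form; apply/eqP; ring. Qed.

Lemma osc_form_roots2_x1 (x0 x1 x2 x3 t1 t2 : F) : t1 != t2 ->
  osc_form x0 x1 x2 x3 t1 = 0 -> osc_form x0 x1 x2 x3 t2 = 0 ->
  3 * x1 = 3 * (t1 + t2) * x2 - (t1 ^+ 2 + t1 * t2 + t2 ^+ 2) * x3.
Proof.
move=> nt e1 e2.
have : (t1 - t2) * (3 * (t1 + t2) * x2 - (t1 ^+ 2 + t1 * t2 + t2 ^+ 2) * x3 - 3 * x1) = 0.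
  transitivity (osc_form x0 x1 x2 x3 t1 - osc_form x0 x1 x2 x3 t2).
    by rewrite /osc_form; ring.
  by rewrite e1 e2 subrr.
by move/eqP; rewrite mulf_eq0 subr_eq0 (negbTE nt) /= subr_eq0 => /eqP.
Qed.

Section CharNot3.
Hypothesis three_neq0 : 3%:R != 0 :> F.

Lemma nGamma_le3 P : P \in points F -> (nGamma P <= 3)%N.
Proof.
case/point_vec => x nx ->; rewrite [x]vec4E nGamma_vec4 -oppr_eq0.
apply: card_proj_roots_cubic_le3; apply: contra nx => /and4P[].
rewrite !oppr_eq0 !mulf_eq0 !(negbTE three_neq0) /= => h3 h2 h1 h0.
by rewrite [x]vec4E vec4_eq0 h0 h1 h2 h3.
Qed.

(* Vieta: the three roots of [osc_form x0 x1 x2 x3] sum to [3 * x2 / x3]. *)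
Lemma osc_form_third_root (x0 x1 x2 x3 t1 t2 : F) : x3 != 0 -> t1 != t2 ->
  osc_form x0 x1 x2 x3 t1 = 0 -> osc_form x0 x1 x2 x3 t2 = 0 ->
  osc_form x0 x1 x2 x3 (3 * x2 / x3 - t1 - t2) = 0.
Proof.
move=> nx3 nt e1 e2; rewrite /osc_form (osc_form_root_x0 e1).
have -> : x1 = (3 * (t1 + t2) * x2 - (t1 ^+ 2 + t1 * t2 + t2 ^+ 2) * x3) / 3.
  by rewrite -(osc_form_roots2_x1 nt e1 e2); field.
by field; rewrite three_neq0 nx3.
Qed.

Lemma on_tangent_of_double_root (x0 x1 x2 x3 t1 t2 : F) : x3 != 0 -> t1 != t2 ->
  osc_form x0 x1 x2 x3 t1 = 0 -> osc_form x0 x1 x2 x3 t2 = 0 ->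
  3 * x2 / x3 - t1 - t2 = t1 -> on_tangent <<vec4 x0 x1 x2 x3>>%MS.
Proof.
move=> nx3 nt e1 e2 r_eq.
have e : 3 * x2 / x3 = 2 * t1 + t2.
  by rewrite -(subrK t1 (3 * x2 / x3)) -(subrK t2 (3 * x2 / x3 - t1)) r_eq; ring.
have ex2 : x2 = x3 * (2 * t1 + t2) / 3 by rewrite -e; field; rewrite three_neq0 nx3.
have ex1 : x1 = (3 * (t1 + t2) * x2 - (t1 ^+ 2 + t1 * t2 + t2 ^+ 2) * x3) / 3.
  by rewrite -(osc_form_roots2_x1 nt e1 e2); field.
have -> : vec4 x0 x1 x2 x3 = x3 *: vec4 (t1 ^+ 3) (t1 ^+ 2) t1 1
    + (x3 * (t2 - t1) / 3) *: vec4 (3 * t1 ^+ 2) (2 * t1) 1 0.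
  by rewrite !vec4Z vec4D (osc_form_root_x0 e1) ex1 ex2; congr vec4; field.
exact: on_tangent_lincomb.
Qed.

Lemma on_tangent_of_roots2 (x0 x1 x2 x3 t1 t2 : F) : x3 != 0 -> t1 != t2 ->
  [set s | osc_form x0 x1 x2 x3 s == 0] = [set t1; t2] -> on_tangent <<vec4 x0 x1 x2 x3>>%MS.
Proof.
move=> nx3 nt roots.
have root s : s \in [set t1; t2] -> osc_form x0 x1 x2 x3 s = 0.
  by rewrite -roots inE => /eqP.
have e1 := root t1 (set21 t1 t2); have e2 := root t2 (set22 t1 t2).
have : 3 * x2 / x3 - t1 - t2 \in [set t1; t2] by rewrite -roots inE osc_form_third_root.
case/set2P => r_eq; first exact: on_tangent_of_double_root nx3 nt e1 e2 r_eq.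
apply: on_tangent_of_double_root nx3 _ e2 e1 _; first by rewrite eq_sym.
by rewrite addrAC.
Qed.

Lemma on_tangent_of_roots1 (x0 x1 x2 t : F) :
  [set s | osc_form x0 x1 x2 0 s == 0] = [set t] -> on_tangent <<vec4 x0 x1 x2 0>>%MS.
Proof.
move=> roots.
have root s : (osc_form x0 x1 x2 0 s == 0) = (s == t).
  by have /setP/(_ s) := roots; rewrite !inE.
have et : osc_form x0 x1 x2 0 t = 0 by apply/eqP; rewrite root.
have [x20|nx2] := eqVneq x2 0.
  have -> : vec4 x0 x1 x2 0 = x0 *: vec4 1 0 0 0 + x1 *: vec4 0 1 0 0.
    by rewrite !vec4Z vec4D x20; congr vec4; ring.
  exact: on_tangent_inf_lincomb.
have rt : x1 / x2 - t = t.
  by apply/eqP; rewrite -root; apply/eqP; rewrite -[RHS]et /osc_form; field.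
have ex1 : x1 = 2 * t * x2 by rewrite -(divfK nx2 x1) -(subrK t (x1 / x2)) rt; ring.
have -> : vec4 x0 x1 x2 0 =
    0 *: vec4 (t ^+ 3) (t ^+ 2) t 1 + x2 *: vec4 (3 * t ^+ 2) (2 * t) 1 0.
  by rewrite !vec4Z vec4D (osc_form_root_x0 et) ex1; congr vec4; ring.
exact: on_tangent_lincomb.
Qed.

Lemma on_tangent_of_nGamma2 P : P \in points F -> nGamma P = 2 -> on_tangent P.
Proof.
case/point_vec => x _ ->; rewrite [x]vec4E nGamma_vec4.
set S := [set s | _]; have [x30|nx3] := eqVneq (x 0 3) 0.
  rewrite add1n => -[/eqP/cards1P[t St]].
  by move: St; rewrite /S x30; apply: on_tangent_of_roots1.
by rewrite add0n => /eqP/cards2P[t1 [t2 [nt St]]]; apply: (on_tangent_of_roots2 nx3 nt).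
Qed.

Lemma nGamma_tangent_lincomb t a b : b != 0 ->
  nGamma <<a *: vec4 (t ^+ 3) (t ^+ 2) t 1 + b *: vec4 (3 * t ^+ 2) (2 * t) 1 0>>%MS = 2.
Proof.
move=> nb; rewrite !vec4Z vec4D nGamma_vec4 mulr1 mulr0 addr0.
have osc_formE s : osc_form (a * t ^+ 3 + b * (3 * t ^+ 2)) (a * t ^+ 2 + b * (2 * t))
    (a * t + b * 1) a s = (t - s) ^+ 2 * (a * (t - s) + 3 * b).
  by rewrite /osc_form; ring.
have [a0|na] := eqVneq a 0.
  rewrite (_ : [set s | _] = [set t]) ?cards1 //; apply/setP => s.
  rewrite !inE osc_formE a0 mul0r add0r !mulf_eq0 (negbTE three_neq0) (negbTE nb) !orbF.
  by rewrite orbb subr_eq0 eq_sym.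
rewrite (_ : [set s | _] = [set t; t + 3 * b / a]) ?cards2; last first.
  apply/setP => s; rewrite !inE osc_formE.
  have -> : a * (t - s) + 3 * b = a * (t + 3 * b / a - s) by field.
  by rewrite !mulf_eq0 (negbTE na) /= orbb !subr_eq0 ![_ == s]eq_sym.
rewrite eq_sym -subr_eq0 addrAC subrr add0r !mulf_eq0 invr_eq0.
by rewrite (negbTE three_neq0) (negbTE nb) (negbTE na).
Qed.

Lemma nGamma_tangent_inf_lincomb a b : b != 0 ->
  nGamma <<a *: vec4 1 0 0 0 + b *: vec4 0 1 0 0>>%MS = 2.
Proof.
move=> nb; rewrite !vec4Z vec4D nGamma_vec4.
rewrite (_ : [set s | _] = [set a / (3 * b)]); first by rewrite cards1 !mulr0 addr0 eqxx.
apply/setP => s; rewrite !inE.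
have -> : osc_form (a * 1 + b * 0) (a * 0 + b * 1) (a * 0 + b * 0) (a * 0 + b * 0) s =
    3 * b * (a / (3 * b) - s).
  by rewrite /osc_form; field; rewrite three_neq0 nb.
by rewrite !mulf_eq0 (negbTE three_neq0) (negbTE nb) subr_eq0 eq_sym.
Qed.

Lemma nGamma_on_tangent P : P \in points F -> P \notin curve F -> on_tangent P -> nGamma P = 2.
Proof.
case/point_vec => x nx -> offC /orP[/existsP[t]|].
  rewrite sub_tangent => /sub_adds_rV[a [b Ex]]; rewrite Ex in nx offC *.
  apply: nGamma_tangent_lincomb; apply: contraNneq offC => b0.
  move: nx; rewrite b0 scale0r addr0 scaler_eq0 negb_or => /andP[na _].
  by rewrite (eq_genmx (eqmx_scale _ na)); apply: Cpt_curve.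
rewrite sub_tangent_inf => /sub_adds_rV[a [b Ex]]; rewrite Ex in nx offC *.
apply: nGamma_tangent_inf_lincomb; apply: contraNneq offC => b0.
move: nx; rewrite b0 scale0r addr0 scaler_eq0 negb_or => /andP[na _].
by rewrite (eq_genmx (eqmx_scale _ na)); apply: Cinf_curve.
Qed.

Lemma T_pointE P : P \in points F -> P \notin curve F -> T_point P = (nGamma P == 2).
Proof.
move=> pP offC; rewrite /T_point pP offC.
by apply/idP/eqP => [/(nGamma_on_tangent pP offC)|/(on_tangent_of_nGamma2 pP)].
Qed.

End CharNot3.
End GammaPoints.

Lemma natr3_neq0 (F : finFieldType) : (#|F| %% 3 != 0)%N -> 3%:R != 0 :> F.
Proof.
apply: contraNneq => three_eq0.
have char3 : 3 \in [pchar F] by rewrite inE /= three_eq0 eqxx.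
have /= cardF := card_pprimeChar char3.
rewrite cardF; case: (logn _ _) cardF => [|k] cardF; last by rewrite expnS modnMr.
by have := finNzRing_gt1 F; rewrite cardF.
Qed.

Section LineCounts.
Variables (F : finFieldType) (l : 'M[F]_4).
Hypothesis line_l : l \in lines F.
Hypothesis l_offC : forall P, P \in curve F -> ~~ (P <= l)%MS.
Hypothesis l_offGamma : forall H, H \in Gamma_planes F -> ~~ (l <= H)%MS.

Let planes_l := [set H in planes F | (l <= H)%MS].
Let points_l := [set P in points F | (P <= l)%MS].

Lemma sum_nC_planes_through_line : (\sum_(H in planes_l) nC H = #|F| + 1)%N.
Proof.
rewrite double_count -card_curve -sum1_card; apply: eq_bigr => P PC.
rewrite -[RHS](cards1 <<(l + P)%MS>>%MS) -planes_through_line_point ?curve_point ?l_offC //.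
by apply: eq_card => H; rewrite !inE andbA.
Qed.

Lemma sum_nGamma_points_on_line : (\sum_(P in points_l) nGamma P = #|F| + 1)%N.
Proof.
rewrite double_count -card_Gamma_planes -sum1_card; apply: eq_bigr => H HG.
rewrite -[RHS](cards1 <<l :&: H>>%MS) -points_of_line_plane ?Gamma_plane_plane ?l_offGamma //.
by apply: eq_card => P; rewrite !inE andbA.
Qed.

Lemma Pi_dE d : Pi_d l d = #|[set H in planes_l | nC H == d]|.
Proof. by apply: eq_card => H; rewrite !inE andbA. Qed.

Lemma Pi_1barE : Pi_1bar l = Pi_d l 1.
Proof.
apply: eq_card => H; case lH: (l <= H)%MS; last by rewrite !inE lH !andbF.
by have := contraTN (@l_offGamma H) lH; rewrite !inE lH /= => ->; rewrite andbT.
Qed.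

Lemma P_muGammaE mu : P_muGamma l mu = #|[set P in points_l | nGamma P == mu]|.
Proof.
apply: eq_card => P; case Pl: (P <= l)%MS; last by rewrite !inE Pl !andbF.
by have := contraTN (@l_offC P) Pl; rewrite /muGamma_point !inE Pl => ->; rewrite /= !andbT.
Qed.

Lemma P_TE : 3%:R != 0 :> F -> P_T l = #|[set P in points_l | nGamma P == 2]|.
Proof.
move=> three_neq0; apply: eq_card => P; case Pl: (P <= l)%MS; last by rewrite !inE Pl !andbF.
rewrite !inE Pl !andbT; case pP: (P \in points F); last by rewrite /T_point pP.
by rewrite T_pointE // (contraTN (@l_offC P) Pl).
Qed.

End LineCounts.

Theorem proposition3p7 (F : finFieldType) (L : fieldExtType F)
    (dimL : \dim {: L} = 2%N) (l : 'M[F]_4) :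
  (5 <= #|F|)%N -> EnGamma_line L l ->
  [/\ (Pi_1bar l + 2 * Pi_d l 2 + 3 * Pi_d l 3 = #|F| + 1)%N,
      Pi_d l 0 = (Pi_d l 2 + 2 * Pi_d l 3)%N
    & (#|F| %% 3 != 0)%N ->
      (P_muGamma l 1 + 2 * P_T l + 3 * P_muGamma l 3 = #|F| + 1)%N /\
      P_muGamma l 0 = (P_T l + 2 * P_muGamma l 3)%N].
Proof.
move=> _ [line_l l_offC l_offGamma _ _].
set planes_l := [set H in planes F | (l <= H)%MS].
set points_l := [set P in points F | (P <= l)%MS].
have le3_planes : {in planes_l, forall H, nC H <= 3}%N.
  by move=> H; rewrite inE => /andP[/nC_le3].
have := sum_by_value_le3 le3_planes; have := card_by_value_le3 le3_planes.
rewrite sum_nC_planes_through_line // card_planes_line // -!Pi_dE Pi_1barE //.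
move=> card_planes_l sum_planes_l; split; [lia | lia | move=> /natr3_neq0 three_neq0].
have le3_points : {in points_l, forall P, nGamma P <= 3}%N.
  by move=> P; rewrite inE => /andP[/(nGamma_le3 three_neq0)].
have := sum_by_value_le3 le3_points; have := card_by_value_le3 le3_points.
rewrite sum_nGamma_points_on_line // card_points_line // -P_TE // -!P_muGammaE //.
lia.
Qed.
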